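(* Let $\sigma$ be a countable relational signature containing a relation symbol $R$ of arity at least $2$, and let $k\geq1$ be an integer; if $k\geq2$ assume moreover that $\sigma$ contains a relation symbol $Q\neq R$. Let $\mathbf P=\{\mathcal A\in\mathbf S_\sigma:\mathcal A\text{ has at most }k\text{ connected components}\}$. Then $\mathbf P$ is not expressible in $FO(\sigma)$; every abstract logic $L(\sigma)\geq FO(\sigma)$ that can express $\mathbf P$ fails the $\aleph_0$-compactness property; and every such logic which is moreover closed under negation has no sound and complete proof system.
   Context: In a $\sigma$-structure $\mathcal A$, distinct $a,b$ are adjacent if both occur in some tuple of some relation $S^{\mathcal A}$, $S\in\sigma$; a path is a sequence of distinct elements each adjacent to the next; the connected components are the classes of the equivalence relation ``$a=b$ or there is a path from $a$ to $b$''. $\mathbf S_\sigma$ is the class of $\sigma$-structures. An abstract logic over $\sigma$ is a pair $(L(\sigma),\models_{L(\sigma)})$ with isomorphism-invariant satisfaction relation; a class is expressed by it if some sentence is satisfied exactly by its members; $L(\sigma)\geq FO(\sigma)$ means every first-order expressible class is $L(\sigma)$-expressible; $\aleph_0$-compactness: every countable finitely satisfiable set of sentences is satisfiable; closed under negation: each sentence has a sentence true exactly where it is false. A proof system $(\Pi,p,c)$ assigns to each $\pi$ a finite sequence of premisses and a conclusion; sound: premisses semantically entail the conclusion; complete: whenever $\Gamma$ entails $\psi$ some $\pi$ has conclusion $\psi$ and all premisses in $\Gamma$. *)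

From Stdlib Require Import List Arith Lia.
From Stdlib Require Vectors.Fin.
Import ListNotations.

Set Implicit Arguments.

Definition countable (X : Type) : Prop :=
  exists f : X -> nat, forall x y, f x = f y -> x = y.

Record structure (Sym : Type) (ar : Sym -> nat) : Type := Structure {
  dom : Type;
  dom_ne : inhabited dom;
  rel : forall S : Sym, (Fin.t (ar S) -> dom) -> Prop
}.
Arguments dom {Sym ar} _.
Arguments rel {Sym ar} _ _ _.

Section Structures.
Variables (Sym : Type) (ar : Sym -> nat).

Definition isomorphic (A B : structure ar) : Prop :=
  exists (f : dom A -> dom B) (g : dom B -> dom A),
    (forall x, g (f x) = x) /\ (forall y, f (g y) = y) /\
    (forall (S : Sym) (t : Fin.t (ar S) -> dom A),
        rel A S t <-> rel B S (fun i => f (t i))).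

Definition adjacent (A : structure ar) (a b : dom A) : Prop :=
  a <> b /\
  exists (S : Sym) (t : Fin.t (ar S) -> dom A) (i j : Fin.t (ar S)),
    rel A S t /\ t i = a /\ t j = b.

Fixpoint chain {X : Type} (r : X -> X -> Prop) (l : list X) : Prop :=
  match l with
  | [] => True
  | x :: l' => match l' with
               | [] => True
               | y :: _ => r x y /\ chain r l'
               end
  end.

Definition is_path (A : structure ar) (l : list (dom A)) : Prop :=
  NoDup l /\ chain (adjacent A) l.

Definition connected (A : structure ar) (a b : dom A) : Prop :=
  a = b \/
  exists l : list (dom A), is_path A (a :: l) /\ l <> [] /\ last l a = b.

(* A has at most k connected components: there are at most k classes of
   the equivalence relation [connected], i.e. some list of at most k
   elements meets every class. *)
Definition at_most_k_components (k : nat) (A : structure ar) : Prop :=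
  exists reps : list (dom A),
    length reps <= k /\ forall a : dom A, exists b, In b reps /\ connected A a b.

Inductive formula : Type :=
| F_rel : forall S : Sym, (Fin.t (ar S) -> nat) -> formula
| F_eq : nat -> nat -> formula
| F_bot : formula
| F_imp : formula -> formula -> formula
| F_all : nat -> formula -> formula.

Definition update {D : Type} (e : nat -> D) (x : nat) (d : D) : nat -> D :=
  fun y => if Nat.eqb y x then d else e y.

Fixpoint fo_sat (A : structure ar) (e : nat -> dom A) (phi : formula) : Prop :=
  match phi with
  | @F_rel s v => rel A s (fun i => e (v i))
  | F_eq x y => e x = e y
  | F_bot => False
  | F_imp p q => fo_sat A e p -> fo_sat A e q
  | F_all x p => forall d : dom A, fo_sat A (update e x d) p
  end.

Fixpoint free_in (x : nat) (phi : formula) : Prop :=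
  match phi with
  | @F_rel s v => exists i, v i = x
  | F_eq y z => y = x \/ z = x
  | F_bot => False
  | F_imp p q => free_in x p \/ free_in x q
  | F_all y p => y <> x /\ free_in x p
  end.

Definition fo_sentence (phi : formula) : Prop := forall x, ~ free_in x phi.

Definition fo_expressible (P : structure ar -> Prop) : Prop :=
  exists phi : formula, fo_sentence phi /\
    forall A : structure ar, (forall e : nat -> dom A, fo_sat A e phi) <-> P A.

(* An abstract logic is a type L of sentences together with a satisfaction
   relation sat; isomorphism invariance is a separate hypothesis. *)
Definition iso_invariant (L : Type) (sat : structure ar -> L -> Prop) : Prop :=
  forall A B : structure ar, isomorphic A B -> forall phi, sat A phi <-> sat B phi.

Definition expresses (L : Type) (sat : structure ar -> L -> Prop)
  (P : structure ar -> Prop) : Prop :=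
  exists phi : L, forall A : structure ar, sat A phi <-> P A.

Definition extends_FO (L : Type) (sat : structure ar -> L -> Prop) : Prop :=
  forall P : structure ar -> Prop, fo_expressible P -> expresses sat P.

Definition satisfiable (L : Type) (sat : structure ar -> L -> Prop)
  (Gamma : L -> Prop) : Prop :=
  exists A : structure ar, forall phi, Gamma phi -> sat A phi.

Definition finitely_satisfiable (L : Type) (sat : structure ar -> L -> Prop)
  (Gamma : L -> Prop) : Prop :=
  forall l : list L, (forall phi, In phi l -> Gamma phi) ->
    exists A : structure ar, forall phi, In phi l -> sat A phi.

Definition countable_set (L : Type) (Gamma : L -> Prop) : Prop :=
  exists f : nat -> L, forall phi, Gamma phi -> exists n, f n = phi.

Definition aleph0_compact (L : Type) (sat : structure ar -> L -> Prop) : Prop :=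
  forall Gamma : L -> Prop, countable_set Gamma ->
    finitely_satisfiable sat Gamma -> satisfiable sat Gamma.

Definition closed_under_negation (L : Type) (sat : structure ar -> L -> Prop) : Prop :=
  forall phi : L, exists psi : L, forall A : structure ar, sat A psi <-> ~ sat A phi.

Definition entails (L : Type) (sat : structure ar -> L -> Prop)
  (Gamma : L -> Prop) (psi : L) : Prop :=
  forall A : structure ar, (forall phi, Gamma phi -> sat A phi) -> sat A psi.

(* A proof system (Pi, p, c): premisses p pi (finite sequence), conclusion c pi. *)
Definition proof_sound (L : Type) (sat : structure ar -> L -> Prop)
  (Pi : Type) (p : Pi -> list L) (c : Pi -> L) : Prop :=
  forall pi : Pi, entails sat (fun phi => In phi (p pi)) (c pi).

Definition proof_complete (L : Type) (sat : structure ar -> L -> Prop)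
  (Pi : Type) (p : Pi -> list L) (c : Pi -> L) : Prop :=
  forall (Gamma : L -> Prop) (psi : L), entails sat Gamma psi ->
    exists pi : Pi, c pi = psi /\ forall phi, In phi (p pi) -> Gamma phi.

Definition has_sound_complete_proof_system (L : Type)
  (sat : structure ar -> L -> Prop) : Prop :=
  exists (Pi : Type) (p : Pi -> list L) (c : Pi -> L),
    proof_sound sat p c /\ proof_complete sat p c.

End Structures.

(* Part one is an Ehrenfeucht-Fraisse argument.  [Zchains C c0] is a disjoint
   union of copies of Z, one per element of C, where R holds of the tuples
   (p, p + 1, ..., p + 1); with |C| = n it has exactly n components.  Two
   assignments that realise the same chain offsets of size at most 2^n are
   indistinguishable by formulas of quantifier rank n, so k and k + 1 chains
   satisfy the same sentences.

   Part two builds an FO theory T_0, T_1, ... such that (a) every finite part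
   holds in a connected marked path (the path on nat with k + 1 marks placed
   N + 1 apart), but (b) no structure with at most k components satisfies all
   of it: T says that all symbols other than R are empty, that R-tuples have
   the shape (a, b, ..., b), that there are k + 1 distinct marks, and that
   distinct marks are more than n steps apart for every n.  By pigeonhole two
   marks would share a component, hence be at finite distance.  Adding the
   sentence for "at most k components" gives a countable finitely satisfiable
   unsatisfiable set.  Finally, negation plus a sound and complete proof system
   would yield compactness. *)

From Stdlib Require Import List Arith Lia ZArith.
From Stdlib Require Import Classical ClassicalEpsilon FunctionalExtensionality.
From Stdlib Require Vectors.Fin.
Import ListNotations.

Definition fin_nat {n : nat} (i : Fin.t n) : nat := proj1_sig (Fin.to_nat i).

Lemma fin_nat_lt {n : nat} (i : Fin.t n) : fin_nat i < n.
Proof. exact (proj2_sig (Fin.to_nat i)). Qed.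

Lemma fin_nat_of {p n : nat} (h : p < n) : fin_nat (Fin.of_nat_lt h) = p.
Proof. unfold fin_nat. now rewrite Fin.to_nat_of_nat. Qed.

Lemma fin_nat_inj {n : nat} (i j : Fin.t n) : fin_nat i = fin_nat j -> i = j.
Proof. apply Fin.to_nat_inj. Qed.

Fixpoint all_fin (n : nat) : list (Fin.t n) :=
  match n with 0 => [] | S n' => Fin.F1 :: map Fin.FS (all_fin n') end.

Lemma all_fin_In (n : nat) (i : Fin.t n) : In i (all_fin n).
Proof. induction i; simpl; [left | right; apply in_map]; auto. Qed.

Lemma all_fin_NoDup (n : nat) : NoDup (all_fin n).
Proof.
  induction n as [|n IH]; simpl; constructor.
  - intros Hin. apply in_map_iff in Hin as [x [Hx _]]. discriminate.
  - apply NoDup_map_NoDup_ForallPairs; auto.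
    intros a b _ _ Hab. now apply Fin.FS_inj.
Qed.

Lemma all_fin_length (n : nat) : length (all_fin n) = n.
Proof. induction n; simpl; rewrite ?length_map; auto. Qed.

Lemma pigeonhole {X : Type} (g : nat -> X) (l : list X) (n : nat) :
  (forall i, i < n -> In (g i) l) -> length l < n ->
  exists i j, i < j < n /\ g i = g j.
Proof.
  intros Hin Hlen. apply NNPP. intros Hno.
  assert (Hnd : NoDup (map g (seq 0 n))).
  { apply NoDup_map_NoDup_ForallPairs; [|apply seq_NoDup].
    intros a b Ha Hb Hab. apply in_seq in Ha, Hb.
    destruct (lt_eq_lt_dec a b) as [[Hlt|Heq]|Hlt]; auto; exfalso; apply Hno;
      [exists a, b | exists b, a]; split; auto; lia. }
  apply NoDup_incl_length with (l' := l) in Hnd.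
  - rewrite length_map, length_seq in Hnd. lia.
  - intros x Hx. apply in_map_iff in Hx as [i [<- Hi]]. apply in_seq in Hi. apply Hin. lia.
Qed.

Lemma list_in_image_bounded {X : Type} (f : nat -> X) (l : list X) :
  (forall x, In x l -> exists n, f n = x) ->
  exists N, forall x, In x l -> exists n, n <= N /\ f n = x.
Proof.
  induction l as [|a l IH]; intros Hl.
  - exists 0. intros _ [].
  - destruct IH as [N HN]; [intros; apply Hl; now right|].
    destruct (Hl a (or_introl eq_refl)) as [m Hm].
    exists (max m N). intros x [<-|Hx].
    + exists m. split; [lia | auto].
    + destruct (HN x Hx) as [n [Hn Hfn]]. exists n. split; [lia | auto].
Qed.

Lemma last_default_irrel {X : Type} (l : list X) (a b : X) : l <> [] -> last l a = last l b.
Proof.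
  induction l as [|c l IH]; simpl; intros H; [congruence|].
  destruct l; [reflexivity|]. apply IH. discriminate.
Qed.

Lemma last_cons_irrel {X : Type} (b a : X) (l : list X) : last (b :: l) a = last l b.
Proof.
  destruct l as [|c l]; [reflexivity|].
  change (last (c :: l) a = last (c :: l) b). apply last_default_irrel. discriminate.
Qed.

Lemma chain_map_seq {X : Type} (r : X -> X -> Prop) (f : nat -> X) (n s : nat) :
  (forall i, s <= i < s + n -> r (f i) (f (S i))) -> chain r (map f (seq s (S n))).
Proof.
  revert s. induction n as [|n IH]; intros s H; simpl; [auto|].
  split; [apply H; lia|]. apply (IH (S s)). intros i Hi. apply H. lia.
Qed.

Fixpoint within {X : Type} (r : X -> X -> Prop) (n : nat) (a b : X) : Prop :=
  match n with
  | 0 => a = b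
  | S n => within r n a b \/ exists w, r a w /\ within r n w b
  end.

Lemma within_trans {X : Type} (r : X -> X -> Prop) (n m : nat) (a b c : X) :
  within r n a b -> within r m b c -> within r (n + m) a c.
Proof.
  revert a. induction n as [|n IH]; intros a H1 H2; simpl in *; [now subst|].
  destruct H1 as [H1|[w [Hw H1]]]; [left | right; exists w]; eauto.
Qed.

Lemma within_sym {X : Type} (r : X -> X -> Prop) (n : nat) (a b : X) :
  (forall x y, r x y -> r y x) -> within r n a b -> within r n b a.
Proof.
  intros Hsym. revert a b. induction n as [|n IH]; intros a b H; [simpl in *; auto|].
  destruct H as [H|[w [Hw H]]]; [left; auto|].
  replace (S n) with (n + 1) by lia. apply within_trans with w; [auto|].
  right. exists a. split; [auto | reflexivity].
Qed.

Lemma update_same {D : Type} (e : nat -> D) (x : nat) (d : D) : update e x d x = d.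
Proof. unfold update. now rewrite Nat.eqb_refl. Qed.

Lemma update_other {D : Type} (e : nat -> D) (x : nat) (d : D) (y : nat) :
  y <> x -> update e x d y = e y.
Proof. unfold update. intros H. apply Nat.eqb_neq in H. now rewrite H. Qed.

Section Structures.
Variables (Sym : Type) (ar : Sym -> nat).

Lemma connected_of_seq (A : structure ar) (f : nat -> dom A) (n : nat) :
  (forall i j, i <= n -> j <= n -> f i = f j -> i = j) ->
  (forall i, i < n -> adjacent A (f i) (f (S i))) -> connected A (f 0) (f n).
Proof.
  intros Hinj Hadj. destruct n as [|n]; [now left|]. right.
  exists (map f (seq 1 (S n))). split; [|split].
  - change (f 0 :: map f (seq 1 (S n))) with (map f (seq 0 (S (S n)))). split.
    + apply NoDup_map_NoDup_ForallPairs; [|apply seq_NoDup].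
      intros a b Ha Hb. apply in_seq in Ha, Hb. apply Hinj; lia.
    + apply chain_map_seq. intros i Hi. apply Hadj. lia.
  - discriminate.
  - rewrite seq_S, map_app. simpl map. now rewrite last_last.
Qed.

Lemma adjacent_sym (A : structure ar) (a b : dom A) : adjacent A a b -> adjacent A b a.
Proof.
  intros [Hne [s [t [i [j [Ht [Hi Hj]]]]]]].
  split; [congruence|]. now exists s, t, j, i.
Qed.

Lemma connected_invariant {X : Type} (A : structure ar) (f : dom A -> X) :
  (forall a b, adjacent A a b -> f a = f b) ->
  forall a b, connected A a b -> f a = f b.
Proof.
  intros Hf a b [->|[l [[_ Hc] [_ <-]]]]; [reflexivity|].
  revert a Hc. induction l as [|b l IH]; intros a Hc; [reflexivity|].
  destruct Hc as [Hab Hc]. rewrite last_cons_irrel, <- (IH b Hc). now apply Hf.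
Qed.

Lemma connected_within (A : structure ar) (r : dom A -> dom A -> Prop) (a b : dom A) :
  (forall x y, adjacent A x y -> r x y) ->
  connected A a b -> exists n, within r n a b.
Proof.
  intros Hr [->|[l [[_ Hc] [_ <-]]]]; [now exists 0|].
  exists (length l). revert a Hc. induction l as [|b l IH]; intros a Hc; [reflexivity|].
  destruct Hc as [Hab Hc]. rewrite last_cons_irrel. right. exists b. auto.
Qed.

Definition Not (p : formula ar) : formula ar := F_imp p (F_bot ar).
Definition Top : formula ar := Not (F_bot ar).
Definition Or (p q : formula ar) : formula ar := F_imp (Not p) q.
Definition And (p q : formula ar) : formula ar := Not (F_imp p (Not q)).
Definition Ex (x : nat) (p : formula ar) : formula ar := Not (F_all x (Not p)).
Definition Alls (l : list nat) (p : formula ar) : formula ar := fold_right (@F_all _ ar) p l.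
Definition Exs (l : list nat) (p : formula ar) : formula ar := fold_right Ex p l.
Definition BigAnd (l : list (formula ar)) : formula ar := fold_right And Top l.

Lemma sat_Or A e p q : fo_sat A e (Or p q) <-> fo_sat A e p \/ fo_sat A e q.
Proof. simpl. tauto. Qed.

Lemma sat_And A e p q : fo_sat A e (And p q) <-> fo_sat A e p /\ fo_sat A e q.
Proof. simpl. tauto. Qed.

Lemma sat_Ex A e x p : fo_sat A e (Ex x p) <-> exists d, fo_sat A (update e x d) p.
Proof.
  simpl. split; [|intros [d Hd] H; exact (H d Hd)].
  intros H. apply NNPP. intros Hno. apply H. intros d Hd. apply Hno. eauto.
Qed.

Lemma sat_BigAnd A e l : fo_sat A e (BigAnd l) <-> forall p, In p l -> fo_sat A e p.
Proof.
  induction l as [|q l IH]; cbn [BigAnd fold_right].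
  - simpl. tauto.
  - fold (BigAnd l). rewrite sat_And, IH. simpl. firstorder congruence.
Qed.

Lemma sat_Alls A l p e : fo_sat A e (Alls l p) <->
  forall e', (forall y, ~ In y l -> e' y = e y) -> fo_sat A e' p.
Proof.
  revert e. induction l as [|x l IH]; intros e; simpl.
  - split; [|intros H; now apply H].
    intros H e' He. replace e' with e; [auto|].
    apply functional_extensionality. intros y. symmetry. now apply He.
  - split.
    + intros H e' He. specialize (H (e' x)). rewrite IH in H. apply H.
      intros y Hy. destruct (Nat.eq_dec y x) as [->|Hyx]; [now rewrite update_same|].
      rewrite update_other by auto. apply He. intros [Hxy|Hin]; [congruence | tauto].
    + intros H d. rewrite IH. intros e' He. apply H. intros y Hy.
      rewrite He by tauto. apply update_other. intros ->. tauto.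
Qed.

Lemma sat_Exs A l p e : fo_sat A e (Exs l p) <->
  exists e', (forall y, ~ In y l -> e' y = e y) /\ fo_sat A e' p.
Proof.
  revert e. induction l as [|x l IH]; intros e; cbn [Exs fold_right].
  - split; [now exists e|]. intros [e' [He H]].
    replace e with e'; [auto|].
    apply functional_extensionality. intros y. now apply He.
  - fold (Exs l p). rewrite sat_Ex. split.
    + intros [d Hd]. rewrite IH in Hd. destruct Hd as [e' [He H]]. exists e'. split; [|auto].
      intros y Hy. rewrite He by (intros Hin; apply Hy; now right).
      apply update_other. intros ->. apply Hy. now left.
    + intros [e' [He H]]. exists (e' x). rewrite IH. exists e'. split; [|auto].
      intros y Hy. destruct (Nat.eq_dec y x) as [->|Hyx]; [now rewrite update_same|].
      rewrite update_other by auto. apply He. intros [Hxy|Hin]; [congruence | tauto].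
Qed.

Fixpoint fv (phi : formula ar) : list nat :=
  match phi with
  | @F_rel _ _ s v => map v (all_fin (ar s))
  | F_eq _ x y => [x; y]
  | F_bot _ => []
  | F_imp p q => fv p ++ fv q
  | F_all x p => fv p
  end.

Lemma fv_spec (phi : formula ar) (x : nat) : free_in x phi -> In x (fv phi).
Proof.
  induction phi; simpl; intros H.
  - destruct H as [i <-]. apply in_map, all_fin_In.
  - destruct H; subst; auto.
  - contradiction.
  - apply in_or_app. tauto.
  - tauto.
Qed.

Lemma free_Alls (l : list nat) (p : formula ar) (x : nat) :
  free_in x (Alls l p) -> ~ In x l /\ free_in x p.
Proof. induction l; simpl; [tauto|]. intros [H1 H2]. apply IHl in H2. intuition. Qed.

Lemma closure_fo_expressible (phi : formula ar) :
  fo_expressible (fun A => forall e, fo_sat A e phi).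
Proof.
  exists (Alls (fv phi) phi). split.
  - intros x H. apply free_Alls in H as [Hx Hfree]. exact (Hx (fv_spec phi x Hfree)).
  - intros A. split.
    + intros H e. exact (proj1 (sat_Alls A _ _ e) (H e) e (fun _ _ => eq_refl)).
    + intros H e. apply sat_Alls. auto.
Qed.

End Structures.

Arguments Not {Sym ar}. Arguments Top {Sym ar}. Arguments Or {Sym ar}.
Arguments And {Sym ar}. Arguments Ex {Sym ar}. Arguments Alls {Sym ar}.
Arguments Exs {Sym ar}. Arguments BigAnd {Sym ar}.
Arguments connected_of_seq {Sym ar}. Arguments adjacent_sym {Sym ar}.
Arguments connected_invariant {Sym ar X}. Arguments connected_within {Sym ar}.
Arguments sat_Or {Sym ar}. Arguments sat_And {Sym ar}. Arguments sat_Ex {Sym ar}.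
Arguments sat_BigAnd {Sym ar}. Arguments sat_Alls {Sym ar}. Arguments sat_Exs {Sym ar}.
Arguments closure_fo_expressible {Sym ar}.

Section ZChains.
Variables (Sym : Type) (ar : Sym -> nat) (R : Sym) (HR : 2 <= ar R).

Definition pos0 : Fin.t (ar R) := Fin.of_nat_lt (Nat.lt_trans 0 1 _ Nat.lt_0_1 HR).
Definition pos1 : Fin.t (ar R) := Fin.of_nat_lt HR.

Lemma pos0_nat : fin_nat pos0 = 0.
Proof. apply fin_nat_of. Qed.

Lemma pos1_nat : fin_nat pos1 = 1.
Proof. apply fin_nat_of. Qed.

Definition succ {C : Type} (p : C * Z) : C * Z := (fst p, (snd p + 1)%Z).

Definition chain_rel (C : Type) (s : Sym) (t : Fin.t (ar s) -> C * Z) : Prop :=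
  s = R /\ exists p, forall i, t i = if fin_nat i =? 0 then p else succ p.

Definition Zchains (C : Type) (c0 : C) : structure ar :=
  Structure ar (inhabits (c0, 0%Z)) (chain_rel C).

Lemma Zchains_adj_succ (C : Type) (c0 : C) (p : C * Z) :
  adjacent (Zchains C c0) (succ p) p.
Proof.
  split.
  - destruct p as [a z]. unfold succ. simpl. intros H. injection H. lia.
  - exists R, (fun i => if fin_nat i =? 0 then p else succ p), pos1, pos0.
    rewrite pos0_nat, pos1_nat. repeat split. now exists p.
Qed.

Lemma Zchains_adj_fst (C : Type) (c0 : C) (a b : C * Z) :
  adjacent (Zchains C c0) a b -> fst a = fst b.
Proof.
  intros [_ [s [t [i [j [[Hs [p Hp]] [<- <-]]]]]]].
  rewrite !Hp. now destruct (fin_nat i =? 0), (fin_nat j =? 0).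
Qed.

(* Each chain is connected: walk from (a, z) to (a, 0) in unit steps. *)
Lemma Zchains_connected_0 (C : Type) (c0 : C) (a : C) (z : Z) :
  connected (Zchains C c0) (a, z) (a, 0%Z).
Proof.
  set (s := if Z_le_gt_dec 0 z then (-1)%Z else 1%Z).
  assert (Hs : ((s = -1 \/ s = 1) /\ s * Z.of_nat (Z.to_nat (Z.abs z)) = - z)%Z)
    by (unfold s; destruct (Z_le_gt_dec 0 z); lia).
  clearbody s. destruct Hs as [Hunit Hsteps].
  set (f := fun i : nat => (a, (z + s * Z.of_nat i)%Z) : C * Z).
  assert (H := connected_of_seq (Zchains C c0) f (Z.to_nat (Z.abs z))).
  replace (f 0) with (a, z) in H by (unfold f; f_equal; lia).
  replace (f _) with (a, 0%Z) in H by (unfold f; f_equal; lia).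
  apply H.
  - intros i j _ _ Hij. unfold f in Hij. injection Hij. destruct Hunit; subst; lia.
  - intros i _. destruct Hunit as [->| ->].
    + replace (f i) with (succ (f (S i))) by (unfold f, succ; cbn [fst snd]; f_equal; lia).
      apply Zchains_adj_succ.
    + replace (f (S i)) with (succ (f i)) by (unfold f, succ; cbn [fst snd]; f_equal; lia).
      apply adjacent_sym, Zchains_adj_succ.
Qed.

Lemma Zchains_components (n m : nat) (c0 : Fin.t n) :
  at_most_k_components m (Zchains (Fin.t n) c0) <-> n <= m.
Proof.
  split.
  - intros [reps [Hlen Hreps]].
    assert (Hincl : incl (all_fin n) (map fst reps)).
    { intros a _. destruct (Hreps (a, 0%Z)) as [b [Hb Hab]].
      apply (connected_invariant (Zchains (Fin.t n) c0) fst (Zchains_adj_fst _ c0)) in Hab.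
      apply in_map_iff. exists b. split; [now rewrite <- Hab | exact Hb]. }
    apply NoDup_incl_length in Hincl; [|apply all_fin_NoDup].
    rewrite all_fin_length, length_map in Hincl. exact (Nat.le_trans _ _ _ Hincl Hlen).
  - intros Hnm. exists (map (fun a => (a, 0%Z)) (all_fin n)). split.
    + now rewrite length_map, all_fin_length.
    + intros [c z]. exists (c, 0%Z).
      split; [apply (in_map (fun a => (a, 0%Z))), all_fin_In | apply Zchains_connected_0].
Qed.

Definition offset {C : Type} (d : Z) (p q : C * Z) : Prop :=
  fst p = fst q /\ snd q = (snd p + d)%Z.

Lemma offset_0 {C : Type} (p q : C * Z) : offset 0 p q <-> p = q.
Proof.
  destruct p, q. unfold offset. simpl. split.
  - intros [-> H]. f_equal. lia.
  - intros H. injection H as -> ->. split; [reflexivity | lia].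
Qed.

Lemma offset_1 {C : Type} (p q : C * Z) : offset 1 p q <-> q = succ p.
Proof.
  destruct p, q. unfold offset, succ. simpl. split.
  - now intros [-> ->].
  - intros H. injection H as -> ->. now split.
Qed.

Lemma offset_sym {C : Type} (d : Z) (p q : C * Z) : offset d p q <-> offset (- d) q p.
Proof. unfold offset. split; intros [H1 H2]; split; auto; lia. Qed.

Lemma offset_trans {C : Type} (a b : Z) (p q r : C * Z) :
  offset a p q -> (offset b q r <-> offset (a + b) p r).
Proof. unfold offset. intros [H1 H2]. split; intros [H3 H4]; split; congruence || lia. Qed.

Lemma offset_refl {C : Type} (d : Z) (p : C * Z) : offset d p p <-> d = 0%Z.
Proof. unfold offset. split; [intros [_ H]; lia | intros ->; split; [auto | lia]]. Qed.

(* The Ehrenfeucht-Fraisse invariant with n rounds left: on the variables V the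
   two assignments realise the same offsets of size at most 2^n. *)
Definition similar {C1 C2 : Type} (n : nat) (V : list nat)
  (e1 : nat -> C1 * Z) (e2 : nat -> C2 * Z) : Prop :=
  forall x y, In x V -> In y V -> forall d, (Z.abs d <= 2 ^ Z.of_nat n)%Z ->
    (offset d (e1 x) (e1 y) <-> offset d (e2 x) (e2 y)).

Lemma similar_sym {C1 C2 : Type} n V (e1 : nat -> C1 * Z) (e2 : nat -> C2 * Z) :
  similar n V e1 e2 -> similar n V e2 e1.
Proof. intros H x y Hx Hy d Hd. symmetry. auto. Qed.

Lemma pow2_S (n : nat) : (2 ^ Z.of_nat (S n) = 2 * 2 ^ Z.of_nat n)%Z.
Proof. rewrite Nat2Z.inj_succ, Z.pow_succ_r; lia. Qed.

Lemma pow2_ge_1 (n : nat) : (1 <= 2 ^ Z.of_nat n)%Z.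
Proof. induction n; [simpl; lia | rewrite pow2_S; lia]. Qed.

Lemma similar_extend {C1 C2 : Type} n V (e1 : nat -> C1 * Z) (e2 : nat -> C2 * Z) x d d' :
  similar (S n) V e1 e2 ->
  (forall w a, In w V -> (Z.abs a <= 2 ^ Z.of_nat n)%Z ->
     (offset a d (e1 w) <-> offset a d' (e2 w))) ->
  similar n (x :: V) (update e1 x d) (update e2 x d').
Proof.
  intros Hsim Hnew y w Hy Hw a Ha.
  destruct (Nat.eq_dec y x) as [->|Hyx]; destruct (Nat.eq_dec w x) as [->|Hwx];
    rewrite ?update_same, ?update_other by auto.
  - rewrite !offset_refl. tauto.
  - apply Hnew; [destruct Hw; [congruence | auto] | auto].
  - rewrite (offset_sym a (e1 y)), (offset_sym a (e2 y)).
    apply Hnew; [destruct Hy; [congruence | auto] | lia].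
  - apply Hsim; [destruct Hy; [congruence | auto] | destruct Hw; [congruence | auto] |].
    rewrite pow2_S. lia.
Qed.

Definition abs_sum {X : Type} (g : X -> Z) (l : list X) : Z :=
  fold_right (fun z acc => Z.abs (g z) + acc)%Z 0%Z l.

Lemma abs_sum_bound {X : Type} (g : X -> Z) (l : list X) (w : X) :
  In w l -> (Z.abs (g w) <= abs_sum g l)%Z.
Proof.
  assert (Hnn : forall l, (0 <= abs_sum g l)%Z) by (induction l0; simpl; lia).
  induction l as [|z l IH]; simpl; [tauto|].
  intros [->|H]; [specialize (Hnn l) | specialize (IH H)]; lia.
Qed.

(* The "forth" step of the game: a new point d of the first structure is
   answered either by the same offset from a nearby old point, or by a point
   far from everything (in the chain of c2). *)
Lemma similar_forth {C1 C2 : Type} (c2 : C2) n V (e1 : nat -> C1 * Z) (e2 : nat -> C2 * Z)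
  x d : similar (S n) V e1 e2 -> exists d', similar n (x :: V) (update e1 x d) (update e2 x d').
Proof.
  intros Hsim.
  destruct (classic (exists z, In z V /\ fst (e1 z) = fst d /\
      (Z.abs (snd d - snd (e1 z)) <= 2 ^ Z.of_nat n)%Z)) as [[z [Hz [Hf Hd]]]|Hfar].
  - set (a0 := (snd d - snd (e1 z))%Z).
    exists (fst (e2 z), (snd (e2 z) + a0)%Z). apply similar_extend; [auto|].
    intros w a Hw Ha.
    assert (H1 : offset a0 (e1 z) d) by (split; [auto | unfold a0; lia]).
    assert (H2 : offset a0 (e2 z) (fst (e2 z), (snd (e2 z) + a0)%Z)) by now split.
    rewrite (offset_trans _ _ _ _ _ H1), (offset_trans _ _ _ _ _ H2).
    apply Hsim; auto. rewrite pow2_S. unfold a0 in *. lia.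
  - set (M := (2 ^ Z.of_nat n + 1 + abs_sum (fun z => snd (e2 z)) V)%Z).
    exists (c2, M). apply similar_extend; [auto|].
    intros w a Hw Ha. split.
    + intros [H1 H2]. exfalso. apply Hfar. exists w. repeat split; auto.
      rewrite H2. replace (snd d - (snd d + a))%Z with (- a)%Z by lia. now rewrite Z.abs_opp.
    + intros [_ H2]. exfalso. simpl in H2.
      assert (Hb := abs_sum_bound (fun z => snd (e2 z)) V w Hw). simpl in Hb.
      unfold M in H2. lia.
Qed.

Fixpoint qr (phi : formula ar) : nat :=
  match phi with
  | F_imp p q => max (qr p) (qr q)
  | F_all _ p => S (qr p)
  | _ => 0
  end.

(* Similar assignments satisfy the same atoms R(v): such a tuple is determined
   by offsets 0 and 1 from its first entry. *)
Lemma similar_atom {C1 C2 : Type} n V (e1 : nat -> C1 * Z) (e2 : nat -> C2 * Z) s v :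
  similar n V e1 e2 -> (forall i, In (v i) V) ->
  chain_rel C1 s (fun i => e1 (v i)) -> chain_rel C2 s (fun i => e2 (v i)).
Proof.
  intros Hsim Hv [-> [p Hp]]. split; [reflexivity|]. exists (e2 (v pos0)). intros i.
  assert (Hp0 := Hp pos0). rewrite pos0_nat in Hp0. simpl in Hp0.
  destruct (fin_nat i =? 0) eqn:Ei.
  - apply Nat.eqb_eq in Ei. rewrite <- pos0_nat in Ei. apply fin_nat_inj in Ei. now subst.
  - specialize (Hp i). rewrite Ei, <- Hp0 in Hp. apply offset_1.
    apply Hsim; auto; [simpl; apply pow2_ge_1 | now apply offset_1].
Qed.

Lemma similar_fo_equiv {C1 C2 : Type} (c1 : C1) (c2 : C2) (phi : formula ar) :
  forall n V (e1 : nat -> C1 * Z) (e2 : nat -> C2 * Z),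
  qr phi <= n -> (forall x, free_in x phi -> In x V) -> similar n V e1 e2 ->
  (fo_sat (Zchains C1 c1) e1 phi <-> fo_sat (Zchains C2 c2) e2 phi).
Proof.
  induction phi as [s t|x y| |p IHp q IHq|x p IHp]; intros n V e1 e2 Hq Hfree Hsim;
    simpl in *.
  - assert (Hv : forall i, In (t i) V) by (intros i; apply Hfree; eauto).
    split; [apply (similar_atom n V e1 e2 s t Hsim Hv)|].
    apply (similar_atom n V e2 e1 s t (similar_sym _ _ _ _ Hsim) Hv).
  - rewrite <- !offset_0. apply Hsim; auto. simpl. lia.
  - tauto.
  - rewrite (IHp n V e1 e2), (IHq n V e1 e2); auto; tauto || lia.
  - destruct n as [|n]; [lia|].
    assert (Hfree' : forall y, free_in y p -> In y (x :: V)).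
    { intros y Hy. destruct (Nat.eq_dec x y); [now left | right; auto]. }
    split.
    + intros H d'.
      destruct (similar_forth c1 n V e2 e1 x d' (similar_sym _ _ _ _ Hsim)) as [d Hd].
      rewrite <- (IHp n (x :: V) (update e1 x d)); auto; [lia | now apply similar_sym].
    + intros H d. destruct (similar_forth c2 n V e1 e2 x d Hsim) as [d' Hd].
      rewrite (IHp n (x :: V) (update e1 x d) (update e2 x d')); auto. lia.
Qed.

(* Part one of the theorem: k Z-chains and k + 1 Z-chains satisfy the same
   sentences, but only the former has at most k components. *)
Theorem components_not_fo_expressible (k : nat) :
  1 <= k -> ~ fo_expressible (at_most_k_components (ar:=ar) k).
Proof.
  intros Hk [phi [Hsent Hphi]]. destruct k as [|c]; [lia|].
  assert (Hfew : forall e, fo_sat (Zchains (Fin.t (S c)) Fin.F1) e phi)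
    by (apply Hphi, Zchains_components; lia).
  assert (Hmany : at_most_k_components (S c) (Zchains (Fin.t (S (S c))) Fin.F1))
    by (apply Hphi; intros e2;
        rewrite <- (similar_fo_equiv (@Fin.F1 c) Fin.F1 phi (qr phi) [] (fun _ => (Fin.F1, 0%Z)));
        [apply Hfew | lia | intros x Hx; exact (Hsent x Hx) | intros x y []]).
  apply Zchains_components in Hmany. lia.
Qed.

End ZChains.

Section AbstractLogics.
Variables (Sym : Type) (ar : Sym -> nat).

Lemma fo_translation (L : Type) (sat : structure ar -> L -> Prop) :
  extends_FO sat -> inhabited L ->
  exists tr : formula ar -> L, forall phi A, sat A (tr phi) <-> forall e, fo_sat A e phi.
Proof.
  intros Hext Hinh.
  exists (fun phi => epsilon Hinh (fun psi => forall A, sat A psi <-> forall e, fo_sat A e phi)).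
  intros phi. apply (epsilon_spec Hinh
    (fun psi => forall A, sat A psi <-> forall e, fo_sat A e phi)).
  apply Hext, closure_fo_expressible.
Qed.

Lemma not_compact_of_fo_sequence (L : Type) (sat : structure ar -> L -> Prop)
  (P : structure ar -> Prop) (T : nat -> formula ar) :
  extends_FO sat -> expresses sat P ->
  (forall N, exists A, P A /\ forall n e, n <= N -> fo_sat A e (T n)) ->
  (forall A, P A -> (forall n e, fo_sat A e (T n)) -> False) ->
  ~ aleph0_compact sat.
Proof.
  intros Hext [phiP HP] Hfin Hall Hcompact.
  destruct (fo_translation L sat Hext (inhabits phiP)) as [tr Htr].
  set (f := fun n => match n with 0 => phiP | S n => tr (T n) end).
  destruct (Hcompact (fun psi => exists n, f n = psi)) as [A HA].
  - exists f. auto.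
  - intros l Hl. destruct (list_in_image_bounded f l Hl) as [N HN].
    destruct (Hfin N) as [A [HPA HTA]]. exists A. intros psi Hpsi.
    destruct (HN psi Hpsi) as [[|n] [Hn <-]]; simpl.
    + now apply HP.
    + apply Htr. intros e. apply HTA. lia.
  - apply (Hall A).
    + apply HP, HA. now exists 0.
    + intros n e. apply (Htr (T n)), HA. now exists (S n).
Qed.

(* A logic closed under negation with a sound and complete proof system is
   compact: from an unsatisfiable set both a sentence and its negation are
   derivable, from finitely many premisses which have a common model. *)
Lemma compact_of_proof_system (L : Type) (sat : structure ar -> L -> Prop) (psi0 : L) :
  closed_under_negation sat -> has_sound_complete_proof_system sat -> aleph0_compact sat.
Proof.
  intros Hneg [Pi [p [c [Hsound Hcomplete]]]] Gamma _ Hfin. apply NNPP. intros Hunsat.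
  destruct (Hneg psi0) as [npsi Hnpsi].
  assert (Hent : forall psi, entails sat Gamma psi)
    by (intros psi A HA; exfalso; apply Hunsat; now exists A).
  destruct (Hcomplete Gamma psi0 (Hent psi0)) as [pi1 [Hc1 Hp1]].
  destruct (Hcomplete Gamma npsi (Hent npsi)) as [pi2 [Hc2 Hp2]].
  destruct (Hfin (p pi1 ++ p pi2)) as [A HA].
  { intros phi Hphi. apply in_app_or in Hphi as [Hphi|Hphi]; auto. }
  assert (H1 := Hsound pi1 A). assert (H2 := Hsound pi2 A). rewrite Hc1 in H1. rewrite Hc2 in H2.
  apply (proj1 (Hnpsi A)); [apply H2 | apply H1]; intros; apply HA, in_or_app; auto.
Qed.

End AbstractLogics.

Definition tuple_env {D : Type} {m : nat} (t : Fin.t m -> D) (d0 : D) (y : nat) : D :=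
  match lt_dec y m with left H => t (Fin.of_nat_lt H) | right _ => d0 end.

Lemma tuple_env_fin {D : Type} {m : nat} (t : Fin.t m -> D) (d0 : D) (i : Fin.t m) :
  tuple_env t d0 (fin_nat i) = t i.
Proof.
  unfold tuple_env. destruct (lt_dec (fin_nat i) m) as [H|H].
  - f_equal. apply fin_nat_inj, fin_nat_of.
  - exfalso. exact (H (fin_nat_lt i)).
Qed.

Lemma tuple_env_out {D : Type} {m : nat} (t : Fin.t m -> D) (d0 : D) (y : nat) :
  ~ In y (seq 0 m) -> tuple_env t d0 y = d0.
Proof.
  intros H. unfold tuple_env. destruct (lt_dec y m); [|reflexivity].
  exfalso. apply H, in_seq. lia.
Qed.

Section ManyComponents.
Variables (Sym : Type) (ar : Sym -> nat) (R : Sym) (HR : 2 <= ar R) (k : nat).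

Notation pos0 := (pos0 Sym ar R HR).
Notation pos1 := (pos1 Sym ar R HR).
Notation pos0_nat := (pos0_nat Sym ar R HR).
Notation pos1_nat := (pos1_nat Sym ar R HR).

Definition edge (A : structure ar) (a b : dom A) : Prop :=
  rel A R (fun i => if fin_nat i =? 0 then a else b).
Definition linked (A : structure ar) (a b : dom A) : Prop := edge A a b \/ edge A b a.
Definition marked (A : structure ar) (a : dom A) : Prop := rel A R (fun _ => a).

Definition tuple_vars (s : Sym) : Fin.t (ar s) -> nat := fun i => fin_nat i.
Definition Edge (x y : nat) : formula ar :=
  F_rel ar R (fun i => if fin_nat i =? 0 then x else y).
Definition Mark (x : nat) : formula ar := F_rel ar R (fun _ => x).

(* [Dist n x y]: y is within n linked steps of x (uses variables 2 .. n + 1). *)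
Fixpoint Dist (n x y : nat) : formula ar :=
  match n with
  | 0 => F_eq ar x y
  | S n => Or (Dist n x y)
             (Ex (2 + n) (And (Or (Edge x (2 + n)) (Edge (2 + n) x)) (Dist n (2 + n) y)))
  end.

Definition ax_empty (s : Sym) : formula ar :=
  Alls (seq 0 (ar s)) (Not (F_rel ar s (tuple_vars s))).
Definition ax_shape : formula ar :=
  Alls (seq 0 (ar R)) (F_imp (F_rel ar R (tuple_vars R))
    (BigAnd (map (fun j => F_eq ar j 1) (seq 1 (ar R - 1))))).
Definition ax_marks : formula ar :=
  Exs (seq 0 (S k)) (BigAnd
    (flat_map (fun i => map (fun j => Not (F_eq ar i j)) (seq (S i) (k - i))) (seq 0 (S k))
     ++ map Mark (seq 0 (S k)))).
Definition ax_far (n : nat) : formula ar :=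
  Alls [0; 1] (F_imp (Mark 0) (F_imp (Mark 1)
    (F_imp (Not (F_eq ar 0 1)) (Not (Dist n 0 1))))).

Lemma sat_Edge A e x y : fo_sat A e (Edge x y) <-> edge A (e x) (e y).
Proof.
  unfold Edge, edge. simpl.
  replace (fun i : Fin.t (ar R) => e (if fin_nat i =? 0 then x else y))
    with (fun i : Fin.t (ar R) => if fin_nat i =? 0 then e x else e y); [tauto|].
  apply functional_extensionality. intros i. now destruct (fin_nat i =? 0).
Qed.

Lemma sat_Dist A n e x y : (forall j, j < n -> x <> 2 + j /\ y <> 2 + j) ->
  (fo_sat A e (Dist n x y) <-> within (linked A) n (e x) (e y)).
Proof.
  revert e x y. induction n as [|n IH]; intros e x y Hxy; [simpl; tauto|].
  cbn [Dist within]. rewrite sat_Or, IH, sat_Ex by (intros j Hj; apply Hxy; lia).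
  assert (Hx : x <> 2 + n) by (apply Hxy; lia).
  apply or_iff_compat_l. split.
  - intros [d Hd]. rewrite sat_And, sat_Or, !sat_Edge, IH in Hd
      by (intros j Hj; split; [lia | apply Hxy; lia]).
    rewrite update_same, !update_other in Hd by (auto || apply Hxy; lia).
    exists d. exact Hd.
  - intros [w Hw]. exists w. rewrite sat_And, sat_Or, !sat_Edge, IH
      by (intros j Hj; split; [lia | apply Hxy; lia]).
    rewrite update_same, !update_other by (auto || apply Hxy; lia). exact Hw.
Qed.

Lemma ax_empty_spec A s : (forall e, fo_sat A e (ax_empty s)) -> forall t, ~ rel A s t.
Proof.
  intros H t Ht. destruct (dom_ne A) as [d0].
  specialize (H (fun _ => d0)). unfold ax_empty in H. rewrite sat_Alls in H.
  apply (H (tuple_env t d0) (tuple_env_out t d0)). simpl. unfold tuple_vars.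
  replace (fun i => tuple_env t d0 (fin_nat i)) with t; [exact Ht|].
  apply functional_extensionality. intros i. now rewrite tuple_env_fin.
Qed.

Lemma ax_shape_spec A : (forall e, fo_sat A e ax_shape) ->
  forall t, rel A R t -> forall i, fin_nat i <> 0 -> t i = t pos1.
Proof.
  intros H t Ht i Hi. destruct (dom_ne A) as [d0].
  specialize (H (fun _ => d0)). unfold ax_shape in H. rewrite sat_Alls in H.
  specialize (H (tuple_env t d0) (tuple_env_out t d0)). simpl in H. unfold tuple_vars in H.
  replace (fun i => tuple_env t d0 (fin_nat i)) with t in H
    by (apply functional_extensionality; intros j; now rewrite tuple_env_fin).
  rewrite sat_BigAnd in H. specialize (H Ht (F_eq ar (fin_nat i) 1)). simpl in H.
  rewrite tuple_env_fin in H. rewrite <- (tuple_env_fin t d0 pos1), pos1_nat.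
  apply H, (in_map (fun j => F_eq ar j 1)), in_seq.
  assert (Hlt := fin_nat_lt i). lia.
Qed.

Lemma ax_marks_spec A : (forall e, fo_sat A e ax_marks) ->
  exists x : nat -> dom A, (forall i j, i < j <= k -> x i <> x j) /\
    (forall i, i <= k -> marked A (x i)).
Proof.
  intros H. destruct (dom_ne A) as [d0]. specialize (H (fun _ => d0)).
  unfold ax_marks in H. rewrite sat_Exs in H. destruct H as [x [_ H]].
  rewrite sat_BigAnd in H. exists x. split.
  - intros i j Hij. apply (H (Not (F_eq ar i j))), in_or_app. left.
    apply in_flat_map. exists i. split; [apply in_seq; lia|].
    apply (in_map (fun j => Not (F_eq ar i j))), in_seq. lia.
  - intros i Hi. apply (H (Mark i)), in_or_app. right. apply in_map, in_seq. lia.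
Qed.

Lemma ax_far_spec A n : (forall e, fo_sat A e (ax_far n)) ->
  forall a b, marked A a -> marked A b -> a <> b -> ~ within (linked A) n a b.
Proof.
  intros H a b Ha Hb Hab Hn. set (e := fun y => if y =? 0 then a else b).
  specialize (H e). unfold ax_far in H. rewrite sat_Alls in H.
  refine (H e (fun _ _ => eq_refl) Ha Hb Hab _).
  apply (sat_Dist A n e 0 1); [intros; lia | exact Hn].
Qed.

Lemma adjacent_linked A :
  (forall s, s <> R -> forall t, ~ rel A s t) ->
  (forall t, rel A R t -> forall i, fin_nat i <> 0 -> t i = t pos1) ->
  forall a b, adjacent A a b -> linked A a b.
Proof.
  intros Hempty Hshape a b [Hne [s [t [i [j [Ht [<- <-]]]]]]].
  destruct (classic (s = R)) as [->|Hs]; [|exfalso; exact (Hempty s Hs t Ht)].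
  assert (Hpos0 : forall i, fin_nat i = 0 -> i = pos0)
    by (intros i' H'; apply fin_nat_inj; now rewrite H', pos0_nat).
  assert (Hedge : edge A (t pos0) (t pos1)).
  { unfold edge. replace (fun i => if fin_nat i =? 0 then t pos0 else t pos1) with t; [exact Ht|].
    apply functional_extensionality. intros i'. destruct (fin_nat i' =? 0) eqn:E0.
    - apply Nat.eqb_eq, Hpos0 in E0. now subst.
    - apply Hshape; [exact Ht | now apply Nat.eqb_neq]. }
  assert (Hends : forall i, t i = t pos0 \/ t i = t pos1).
  { intros i'. destruct (Nat.eq_dec (fin_nat i') 0) as [H0|H0].
    - left. now rewrite (Hpos0 i' H0).
    - right. now apply Hshape. }
  unfold linked. destruct (Hends i) as [Hi|Hi], (Hends j) as [Hj|Hj]; rewrite Hi, Hj in *;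
    tauto || (exfalso; now apply Hne).
Qed.

(* The combinatorial heart: k + 1 distinct marks pairwise at infinite distance
   cannot live in at most k components, since two of them would share a
   component and hence be at finite distance. *)
Lemma far_marks_many_components A (x : nat -> dom A) :
  (forall a b, adjacent A a b -> linked A a b) ->
  (forall i j, i < j <= k -> x i <> x j) -> (forall i, i <= k -> marked A (x i)) ->
  (forall n a b, marked A a -> marked A b -> a <> b -> ~ within (linked A) n a b) ->
  ~ at_most_k_components k A.
Proof.
  intros Hadj Hdist Hmarked Hfar [reps [Hlen Hreps]].
  destruct (choice (fun i b => In b reps /\ connected A (x i) b) (fun i => Hreps (x i)))
    as [g Hg].
  destruct (pigeonhole g reps (S k)) as [i [j [Hij Hgij]]];
    [intros; apply Hg | lia |].
  destruct (connected_within A (linked A) _ _ Hadj (proj2 (Hg i))) as [n1 H1].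
  destruct (connected_within A (linked A) _ _ Hadj (proj2 (Hg j))) as [n2 H2].
  rewrite Hgij in H1. apply within_sym in H2; [|unfold linked; tauto].
  apply (Hfar (n1 + n2) (x i) (x j)); [apply Hmarked; lia | apply Hmarked; lia
    | apply Hdist; lia | eapply within_trans; eauto].
Qed.

(* The finite approximations: the path 0 - 1 - 2 - ... on nat, with k + 1 marks
   at 0, N + 1, ..., k (N + 1).  It is connected and satisfies the axioms up
   to distance N. *)
Definition mark_point (N c : nat) : Prop := exists j, j <= k /\ c = j * S N.

Definition path_rel (N : nat) (s : Sym) (t : Fin.t (ar s) -> nat) : Prop :=
  s = R /\ ((exists p, forall i, t i = if fin_nat i =? 0 then p else S p) \/
            (exists c, mark_point N c /\ forall i, t i = c)).

Definition marked_path (N : nat) : structure ar := Structure ar (inhabits 0) (path_rel N).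

Lemma marked_path_connected (N : nat) : 1 <= k -> at_most_k_components k (marked_path N).
Proof.
  intros Hk. exists [0]. split; [simpl; lia|]. intros a. exists 0. split; [now left|].
  assert (H := connected_of_seq (marked_path N) (fun i => a - i) a).
  simpl in H. rewrite Nat.sub_0_r, Nat.sub_diag in H. apply H.
  - intros i j Hi Hj Hij. lia.
  - intros i Hi. replace (a - i) with (S (a - S i)) by lia. split; [lia|].
    exists R, (fun l => if fin_nat l =? 0 then a - S i else S (a - S i)), pos1, pos0.
    rewrite pos0_nat, pos1_nat. repeat split. left. now exists (a - S i).
Qed.

Lemma marked_path_edge N a b : edge (marked_path N) a b -> b = S a \/ b = a.
Proof.
  intros [_ [[p Hp]|[c [_ Hc]]]].
  - assert (H0 := Hp pos0). assert (H1 := Hp pos1).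
    rewrite pos0_nat in H0. rewrite pos1_nat in H1. simpl in *. left. congruence.
  - assert (H0 := Hc pos0). assert (H1 := Hc pos1).
    rewrite pos0_nat in H0. rewrite pos1_nat in H1. simpl in *. right. congruence.
Qed.

Lemma marked_path_within N n a b :
  within (linked (marked_path N)) n a b -> a <= b + n /\ b <= a + n.
Proof.
  revert a. induction n as [|n IH]; intros a H; [simpl in H; lia|].
  destruct H as [H|[w [Hw H]]]; apply IH in H; [lia|].
  destruct Hw as [Hw|Hw]; apply marked_path_edge in Hw; lia.
Qed.

Lemma marked_path_marked N a : marked (marked_path N) a -> mark_point N a.
Proof.
  intros [_ [[p Hp]|[c [Hc Hc']]]].
  - assert (H0 := Hp pos0). assert (H1 := Hp pos1).
    rewrite pos0_nat in H0. rewrite pos1_nat in H1. simpl in *. lia.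
  - now rewrite (Hc' pos0).
Qed.

Lemma marked_path_empty N s : s <> R -> forall e, fo_sat (marked_path N) e (ax_empty s).
Proof. intros Hs e. unfold ax_empty. rewrite sat_Alls. intros e' _ [H _]. exact (Hs H). Qed.

Lemma marked_path_shape N : forall e, fo_sat (marked_path N) e ax_shape.
Proof.
  intros e. unfold ax_shape. rewrite sat_Alls. intros e' _ Ht. simpl in Ht.
  apply sat_BigAnd. intros q Hq. apply in_map_iff in Hq as [j [<- Hj]]. apply in_seq in Hj.
  assert (Hjlt : j < ar R) by lia.
  assert (Hj' := fin_nat_of Hjlt). simpl. unfold tuple_vars in Ht.
  rewrite <- Hj', <- pos1_nat.
  destruct Ht as [_ [[p Hp]|[c [_ Hc]]]].
  - rewrite !Hp, pos1_nat, Hj'. destruct j; [lia | reflexivity].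
  - now rewrite !Hc.
Qed.

Lemma marked_path_marks N : forall e, fo_sat (marked_path N) e ax_marks.
Proof.
  intros e. unfold ax_marks. rewrite sat_Exs.
  exists (fun y => if y <=? k then y * S N else e y). split.
  - intros y Hy. destruct (Nat.leb_spec y k); [|reflexivity].
    exfalso. apply Hy, in_seq. lia.
  - rewrite sat_BigAnd. intros q Hq. apply in_app_or in Hq as [Hq|Hq].
    + apply in_flat_map in Hq as [i [Hi Hq]]. apply in_map_iff in Hq as [j [<- Hj]].
      apply in_seq in Hi, Hj. simpl.
      rewrite (proj2 (Nat.leb_le i k)), (proj2 (Nat.leb_le j k)) by lia. nia.
    + apply in_map_iff in Hq as [i [<- Hi]]. apply in_seq in Hi. simpl.
      rewrite (proj2 (Nat.leb_le i k)) by lia. split; [reflexivity|].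
      right. exists (i * S N). split; [exists i; split; [lia | reflexivity] | auto].
Qed.

Lemma marked_path_far N n : n <= N -> forall e, fo_sat (marked_path N) e (ax_far n).
Proof.
  intros Hn e. unfold ax_far. rewrite sat_Alls. intros e' _ H0 H1 Hne HD. simpl in Hne.
  change (marked (marked_path N) (e' 0)) in H0.
  change (marked (marked_path N) (e' 1)) in H1.
  apply marked_path_marked in H0 as [j1 [Hj1 E1]], H1 as [j2 [Hj2 E2]].
  apply (sat_Dist (marked_path N) n e' 0 1) in HD; [|intros; lia].
  apply marked_path_within in HD. rewrite E1, E2 in HD, Hne.
  assert (j1 <> j2) by (intros ->; now apply Hne).
  nia.
Qed.

(* Enumerating the axioms, given a coding h of the symbols: the emptiness axiom
   of the symbol with code q (if any), and the n-th stage of the theory. *)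
Definition ax_empty_code (h : Sym -> nat) (q : nat) : formula ar :=
  match excluded_middle_informative (exists s, s <> R /\ h s = q) with
  | left H => ax_empty (proj1_sig (constructive_indefinite_description _ H))
  | right _ => Top
  end.

Definition axioms (h : Sym -> nat) (n : nat) : formula ar :=
  BigAnd (ax_shape :: ax_marks :: ax_far n :: map (ax_empty_code h) (seq 0 n)).

Lemma ax_empty_code_spec (h : Sym -> nat) (s : Sym) :
  (forall x y, h x = h y -> x = y) -> s <> R -> ax_empty_code h (h s) = ax_empty s.
Proof.
  intros Hh Hs. unfold ax_empty_code.
  destruct excluded_middle_informative as [H|H]; [|exfalso; apply H; now exists s].
  destruct (constructive_indefinite_description _ H) as [s' Hs']. simpl.
  now rewrite (Hh _ _ (proj2 Hs')).
Qed.

Lemma marked_path_axioms (h : Sym -> nat) (N n : nat) :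
  n <= N -> forall e, fo_sat (marked_path N) e (axioms h n).
Proof.
  intros Hn e. apply sat_BigAnd. intros q [<-|[<-|[<-|Hq]]].
  - apply marked_path_shape.
  - apply marked_path_marks.
  - now apply marked_path_far.
  - apply in_map_iff in Hq as [c [<- _]]. unfold ax_empty_code.
    destruct excluded_middle_informative as [H|H]; [|simpl; tauto].
    destruct (constructive_indefinite_description _ H) as [s Hs].
    apply marked_path_empty, Hs.
Qed.

Lemma axioms_unsat (h : Sym -> nat) (A : structure ar) :
  (forall x y, h x = h y -> x = y) -> at_most_k_components k A ->
  (forall n e, fo_sat A e (axioms h n)) -> False.
Proof.
  intros Hh Hcomp Hax.
  assert (Hstage : forall n q, In q (ax_shape :: ax_marks :: ax_far n ::
                                     map (ax_empty_code h) (seq 0 n)) ->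
                   forall e, fo_sat A e q)
    by (intros n q Hq e; exact (proj1 (sat_BigAnd A e _) (Hax n e) q Hq)).
  assert (Hempty : forall s, s <> R -> forall t, ~ rel A s t).
  { intros s Hs. apply ax_empty_spec. rewrite <- (ax_empty_code_spec h s Hh Hs).
    apply (Hstage (S (h s))). do 3 right. apply in_map, in_seq. lia. }
  assert (Hshape := ax_shape_spec A (Hstage 0 ax_shape (or_introl eq_refl))).
  destruct (ax_marks_spec A (Hstage 0 ax_marks (or_intror (or_introl eq_refl))))
    as [x [Hdist Hmarked]].
  apply (far_marks_many_components A x (adjacent_linked A Hempty Hshape) Hdist Hmarked);
    [|exact Hcomp].
  intros n. apply ax_far_spec, (Hstage n). do 2 right. now left.
Qed.

End ManyComponents.

Theorem components_not_compact (Sym : Type) (ar : Sym -> nat) (R : Sym) (k : nat)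
  (L : Type) (sat : structure ar -> L -> Prop) :
  countable Sym -> 2 <= ar R -> 1 <= k -> extends_FO sat ->
  expresses sat (at_most_k_components k) -> ~ aleph0_compact sat.
Proof.
  intros [h Hh] HR Hk Hext HP.
  apply (not_compact_of_fo_sequence _ _ L sat _ (axioms Sym ar R k h) Hext HP).
  - intros N. exists (marked_path Sym ar R k N).
    split; [now apply marked_path_connected | intros n e Hn; now apply marked_path_axioms].
  - intros A HA Hax. exact (axioms_unsat Sym ar R HR k h A Hh HA Hax).
Qed.

Theorem mainTheorem9 (Sym : Type) (ar : Sym -> nat) (Hcount : countable Sym)
  (R : Sym) (HR : 2 <= ar R) (k : nat) (Hk : 1 <= k)
  (HQ : 2 <= k -> exists Q : Sym, Q <> R) :
  ~ fo_expressible (at_most_k_components (ar:=ar) k) /\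
  (forall (L : Type) (sat : structure ar -> L -> Prop),
     iso_invariant sat -> extends_FO sat ->
     expresses sat (at_most_k_components k) ->
     ~ aleph0_compact sat /\
     (closed_under_negation sat -> ~ has_sound_complete_proof_system sat)).
Proof.
  split; [exact (components_not_fo_expressible Sym ar R HR k Hk)|].
  intros L sat _ Hext HP.
  assert (Hnc : ~ aleph0_compact sat)
    by exact (components_not_compact Sym ar R k L sat Hcount HR Hk Hext HP).
  split; [exact Hnc|].
  intros Hneg Hsys. destruct HP as [phiP _].
  exact (Hnc (compact_of_proof_system _ _ L sat phiP Hneg Hsys)).
Qed.
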